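(* Let $d\ge2$ and $r$ be integers with $d<r<2d$, let $a\in k$, and let $\widetilde X(d,r)\subset\mathbb{A}^3=\mathrm{Spec}\,k[x,y,z]$ be the hypersurface $x^rz+y^d+ax^d=1$ and $\widetilde V(d,r)$ the hypersurface $x^rz+y^d=1$. For $\lambda$ a $d$-th root of unity let $p_\lambda(x)\in k[x]$ be the unique polynomial of degree $\le r-1$ with $p_\lambda(0)=\lambda$ such that $x^r$ divides $1-p_\lambda(x)^d-ax^d$. Then: (1) $p_\lambda(x)=\lambda-\frac{a}{d}\lambda x^d$ for every $d$-th root of unity $\lambda$. (2) Put $\sigma(x,c)=\left(1-\frac{a}{d}x^d\right)c$ (which equals $\frac{1}{1-\lambda}\{p_1(\lambda x)-p_\lambda(\lambda x)\}c$ for every $\lambda\ne1$) and $\tau(x,c)=-\frac{a^2}{d^2}x^{2d-r}+\left(1+\frac{a}{d}x^d\right)c$. Then for every $d$-th root of unity $\lambda$, $\lambda^{1-r}x^r\sigma\!\left(\lambda^{-1}x,\lambda^{r-1}\left(c+\frac{1-\lambda}{x^r}\right)\right)=x^r\sigma(x,c)+p_1(x)-p_\lambda(x)$ and $\lambda^{1-r}x^r\tau\!\left(\lambda^{-1}x,\lambda^{r-1}\left(c+\frac{p_1(x)-p_\lambda(x)}{x^r}\right)\right)=x^r\tau(x,c)+1-\lambda$. (3) There is an isomorphism $\widetilde X(d,r)\times\mathbb{A}^1\cong\widetilde V(d,r)\times\mathbb{A}^1$.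
   Context: Work over an algebraically closed field $k$ of characteristic zero; $x,c$ are independent variables and the identities in (2) are identities of rational functions. *)

From HB Require Import structures.
From mathcomp Require Import all_boot all_order all_algebra.
From mathcomp Require Import fraction.
From mathcomp Require Export mpoly.
Set Implicit Arguments. Unset Strict Implicit. Unset Printing Implicit Defensive.
Import Order.TTheory GRing.Theory Num.Theory.
Local Open Scope ring_scope.

Definition is_p_lambda (k : fieldType) (d r : nat) (a lam : k) (p : {poly k}) : Prop :=
  [/\ (size p <= r)%N, p.[0] = lam & 'X^r %| (1 - p ^+ d - a *: 'X^d)].

(* The field of rational functions k(x,c): x is the inner variable, c the outer. *)
Definition RF (k : fieldType) := {fraction {poly {poly k}}}.
Definition RFx (k : fieldType) : RF k := tofrac ('X : {poly k})%:P.
Definition RFc (k : fieldType) : RF k := tofrac ('X : {poly {poly k}}).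
Definition RFpol (k : fieldType) (q : {poly k}) : RF k := tofrac q%:P.

Definition sigma (F : fieldType) (d : nat) (a x c : F) : F :=
  (1 - a / d%:R * x ^+ d) * c.
Definition tau (F : fieldType) (d r : nat) (a x c : F) : F :=
  - (a ^+ 2 / (d%:R ^+ 2)) * x ^+ (2 * d - r) + (1 + a / d%:R * x ^+ d) * c.

(* Points of A^4 = X~ x A^1 and V~ x A^1 (coordinates x,y,z,w). *)
Definition pt0 : 'I_4 := inord 0.
Definition pt1 : 'I_4 := inord 1.
Definition pt2 : 'I_4 := inord 2.
Definition inXt1 (k : ringType) (d r : nat) (a : k) (v : 'I_4 -> k) : Prop :=
  v pt0 ^+ r * v pt2 + v pt1 ^+ d + a * v pt0 ^+ d = 1.
Definition inVt1 (k : ringType) (d r : nat) (v : 'I_4 -> k) : Prop :=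
  v pt0 ^+ r * v pt2 + v pt1 ^+ d = 1.

Definition polymap (k : comRingType) (F : 'I_4 -> {mpoly k[4]}) (v : 'I_4 -> k)
  : 'I_4 -> k := fun i => (F i).@[v].

(* isomorphism of the (reduced) closed subvarieties A, B of A^4 over an
   algebraically closed field: mutually inverse polynomial maps *)
Definition iso_subvar (k : comRingType) (A B : ('I_4 -> k) -> Prop) : Prop :=
  exists F G : 'I_4 -> {mpoly k[4]},
    [/\ forall v, A v -> B (polymap F v),
        forall v, B v -> A (polymap G v),
        forall v, A v -> forall i, polymap G (polymap F v) i = v i
      & forall v, B v -> forall i, polymap F (polymap G v) i = v i].

From HB Require Import structures.
From mathcomp Require Import all_boot all_order all_algebra.
From mathcomp Require Import fraction mpoly.
From mathcomp Require Import ring.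
Set Implicit Arguments.
Unset Strict Implicit.
Unset Printing Implicit Defensive.
Import GRing.Theory.
Local Open Scope ring_scope.

(* Put u = (a/d) x^d.  As r < 2d, x^r divides u^2, so modulo x^r
   (1 - u)^d = 1 - d u = 1 - a x^d; hence p_lambda = lambda (1 - u), and it is
   unique because p^d - q^d = (p - q) S with S(0) = d lambda^(d-1) invertible.
   The identities of (2) are then field identities, using lambda^d = 1.
   For (3), s = 1 - u and t = 1 + u satisfy s t + e x^r = 1 with
   e = (a/d)^2 x^(2d-r), and x^r divides both s^d - (1 - a x^d) and
   t^d (1 - a x^d) - 1.  The polynomial map acting on (y, w) by the matrix
   [[t, x^r], [e, -s]] and on z as forced by the equation of the target
   hypersurface, and the same map with s and t exchanged, are mutually inverse. *)

Lemma expr1B_mod_sqr (R : comPzRingType) (u : R) (n : nat) :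
  exists Q : R, (1 - u) ^+ n = 1 - n%:R * u + u ^+ 2 * Q.
Proof.
elim: n => [|n [Q IH]]; first by exists 0; rewrite expr0 mulr0n mul0r; ring.
by exists (n%:R + Q - u * Q); rewrite exprS IH mulrSr; ring.
Qed.

Lemma natr_neq0_gt0 (R : nzSemiRingType) (n : nat) : n%:R != 0 :> R -> (0 < n)%N.
Proof. by rewrite lt0n; apply: contraNneq => ->. Qed.

Lemma unity_root_neq0 (R : idomainType) (n : nat) (l : R) :
  (0 < n)%N -> l ^+ n = 1 -> l != 0.
Proof.
move=> n_gt0 hl; apply: contraTneq (oner_neq0 R) => l0.
by rewrite -hl l0 expr0n gtn_eqF // eqxx.
Qed.

Lemma expr1DB_cofactors (R : comPzRingType) (X u v : R) (n : nat) :
  u ^+ 2 = X * v -> exists A B : R,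
    X * (v * A) + (1 - u) ^+ n = 1 - n%:R * u /\
    X * (v * B) + (1 + u) ^+ n * (1 - n%:R * u) = 1.
Proof.
move=> u2; have [Q hQ] := expr1B_mod_sqr u n.
have [Q' hQ'] := expr1B_mod_sqr (- u) n; rewrite opprK sqrrN in hQ'.
exists (- Q), (n%:R ^+ 2 - Q' * (1 - n%:R * u)); split.
- by rewrite mulrA -u2 hQ; ring.
- by rewrite mulrA -u2 hQ'; ring.
Qed.

Lemma sqr_polyCXn (R : comNzRingType) (c : R) (d r : nat) : (r <= 2 * d)%N ->
  (c%:P * 'X^d) ^+ 2 = 'X^r * ((c ^+ 2)%:P * 'X^(2 * d - r)).
Proof.
by move=> hr; rewrite exprMn -polyC_exp -exprM [RHS]mulrCA -exprD subnKC // mulnC.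
Qed.

Lemma scale_Xn_natr (k : fieldType) (a : k) (d : nat) : d%:R != 0 :> k ->
  a *: 'X^d = d%:R * ((a / d%:R)%:P * 'X^d).
Proof.
by move=> dk; rewrite mulrA -polyC_natr -polyCM mulrCA divff // mulr1 mul_polyC.
Qed.

Definition p_lam (F : fieldType) (d : nat) (a l : F) : {poly F} :=
  l%:P - (a / d%:R * l) *: 'X^d.

Section PLambda.
Variables (k : fieldType) (d r : nat) (a : k).
Hypotheses (dk_neq0 : d%:R != 0 :> k) (hdr : (d < r)%N) (hr : (r <= 2 * d)%N).

Let d_gt0 : (0 < d)%N := natr_neq0_gt0 dk_neq0.

Lemma p_lam_spec lam : lam ^+ d = 1 -> is_p_lambda d r a lam (p_lam d a lam).
Proof.
move=> hl; split.
- rewrite (leq_trans (size_polyD _ _)) // geq_max size_polyC size_polyN.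
  rewrite (leq_trans (leq_b1 _)) ?(ltn_trans d_gt0 hdr) //.
  by rewrite (leq_trans (size_scale_leq _ _)) // size_polyXn.
- by rewrite !hornerE expr0n gtn_eqF // mulr0 subr0.
set e := a / d%:R; set u : {poly k} := e%:P * 'X^d.
have [Q hQ] := expr1B_mod_sqr u d.
have u2 : u ^+ 2 = 'X^r * ((e ^+ 2)%:P * 'X^(2 * d - r)) by exact: sqr_polyCXn.
have ha : a *: 'X^d = d%:R * u by exact: scale_Xn_natr.
have -> : p_lam d a lam = lam%:P * (1 - u).
  by rewrite /p_lam -/e -mul_polyC polyCM /u; ring.
rewrite exprMn -polyC_exp hl mul1r hQ ha u2.
have -> : 1 - (1 - d%:R * u + 'X^r * ((e ^+ 2)%:P * 'X^(2 * d - r)) * Q) - d%:R * u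
  = 'X^r * - ((e ^+ 2)%:P * 'X^(2 * d - r) * Q) by ring.
exact: dvdp_mulIl.
Qed.

Lemma p_lam_unique lam p q : lam ^+ d = 1 ->
  is_p_lambda d r a lam p -> is_p_lambda d r a lam q -> p = q.
Proof.
move=> hl [sp p0 dp] [sq q0 dq].
have Xr_dvd : 'X^r %| (p - q) * \sum_(i < d) p ^+ (d.-1 - i) * q ^+ i.
  rewrite -subrXX.
  have -> : p ^+ d - q ^+ d = (1 - q ^+ d - a *: 'X^d) - (1 - p ^+ d - a *: 'X^d) by ring.
  exact: dvdp_sub.
have sum0 : (\sum_(i < d) p ^+ (d.-1 - i) * q ^+ i).[0] = d%:R * lam ^+ d.-1.
  rewrite horner_sum (eq_bigr (fun=> lam ^+ d.-1)) ?sumr_const ?card_ord ?mulr_natl //.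
  by move=> i _; rewrite !hornerE p0 q0 -exprD subnK // -ltnS prednK.
rewrite Gauss_dvdpl in Xr_dvd; last first.
  rewrite coprimep_expl // coprimep_sym coprimepX /root sum0.
  by rewrite mulf_neq0 // expf_neq0 // (unity_root_neq0 d_gt0 hl).
apply/eqP; rewrite -subr_eq0; apply: contraTT Xr_dvd => pq_neq0.
apply/negP => /(dvdp_leq pq_neq0); rewrite size_polyXn ltnNge.
by rewrite (leq_trans (size_polyD _ _)) // geq_max size_polyN sp sq.
Qed.

End PLambda.

Section Twist.
Variables (F : fieldType) (d r : nat) (a L : F).
Hypotheses (d_gt0 : (0 < d)%N) (hL : L ^+ d = 1).

Let L_neq0 : L != 0. Proof. exact: unity_root_neq0 d_gt0 hL. Qed.

Lemma p_lam_horner l x : (p_lam d a l).[x] = l - a / d%:R * l * x ^+ d.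
Proof. by rewrite !hornerE. Qed.

Lemma p_lam_comp l : p_lam d a l \Po (L *: 'X) = p_lam d a l.
Proof.
by rewrite comp_polyB comp_polyC comp_polyZ comp_Xn_poly exprZn hL scale1r.
Qed.

Lemma sigma_p_lamB x c : L != 1 ->
  sigma d a x c = (1 - L)^-1 * ((p_lam d a 1).[x] - (p_lam d a L).[x]) * c.
Proof.
move=> L_neq1; rewrite !p_lam_horner /sigma; set e := a / d%:R.
by field; rewrite subr_eq0 eq_sym.
Qed.

Lemma sigma_twist x c : x != 0 ->
  (L ^+ (r - 1))^-1 * x ^+ r
    * sigma d a (L^-1 * x) (L ^+ (r - 1) * (c + (1 - L) / x ^+ r))
  = x ^+ r * sigma d a x c + (p_lam d a 1).[x] - (p_lam d a L).[x].
Proof.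
move=> x_neq0; rewrite !p_lam_horner /sigma exprMn exprVn hL invr1 mul1r.
set e := a / d%:R.
by field; rewrite !expf_neq0.
Qed.

Lemma tau_twist x c : x != 0 -> (0 < r)%N -> (r <= 2 * d)%N ->
  (L ^+ (r - 1))^-1 * x ^+ r
    * tau d r a (L^-1 * x)
        (L ^+ (r - 1) * (c + ((p_lam d a 1).[x] - (p_lam d a L).[x]) / x ^+ r))
  = x ^+ r * tau d r a x c + 1 - L.
Proof.
move=> x_neq0 r_gt0 hr; rewrite !p_lam_horner /tau !exprMn !exprVn hL invr1 mul1r.
have xm : x ^+ (2 * d - r) = x ^+ d * x ^+ d / x ^+ r.
  by rewrite -!exprD addnn -mul2n -[in RHS](subnK hr) exprD mulfK ?expf_neq0.
have Lm : L ^+ (2 * d - r) = (L ^+ (r - 1) * L)^-1.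
  rewrite -exprSr subn1 prednK // -[RHS]mul1r; apply: (canRL (mulfK (expf_neq0 r L_neq0))).
  by rewrite -exprD subnK // mul2n -addnn exprD hL mulr1.
rewrite xm Lm -expr_div_n; set e := a / d%:R.
by field; rewrite L_neq0 oner_neq0 !expf_neq0.
Qed.

End Twist.

Section RationalFunctions.
Variable k : fieldType.

HB.instance Definition _ :=
  GRing.RMorphism.copy (@RFpol k) (@tofrac {poly {poly k}} \o polyC).

Definition RFconst (e : k) : RF k := RFpol e%:P.

HB.instance Definition _ := GRing.RMorphism.copy RFconst (@RFpol k \o polyC).

Lemma RFx_neq0 : RFx k != 0.
Proof. by rewrite tofrac_eq0 polyC_eq0 polyX_eq0. Qed.

Lemma RFpol_p_lam d a l :
  RFpol (p_lam d a l) = (p_lam d (RFconst a) (RFconst l)).[RFx k].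
Proof.
rewrite p_lam_horner /p_lam -mul_polyC rmorphB rmorphM rmorphXn.
suff -> : RFconst a / d%:R * RFconst l = RFconst (a / d%:R * l) by [].
by rewrite rmorphM fmorph_div rmorph_nat.
Qed.

End RationalFunctions.

Definition pt3 : 'I_4 := inord 3.

Lemma pt_cases (i : 'I_4) : [\/ i = pt0, i = pt1, i = pt2 | i = pt3].
Proof.
case: i => [[|[|[|[|n]]]] hi] //;
  [constructor 1 | constructor 2 | constructor 3 | constructor 4];
  by apply: val_inj; rewrite /= inordK.
Qed.

Definition mkpt (R : Type) (x y z w : R) : 'I_4 -> R :=
  fun i => nth x [:: x; y; z; w] i.

Lemma mkptE (R : Type) (x y z w : R) :
  [/\ mkpt x y z w pt0 = x, mkpt x y z w pt1 = y,
      mkpt x y z w pt2 = z & mkpt x y z w pt3 = w].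
Proof. by rewrite /mkpt /pt0 /pt1 /pt2 /pt3 !inordK. Qed.

Section Shear.
Variables (R : comPzRingType) (d r : nat).

Definition xrz_yd (v : 'I_4 -> R) : R := v pt0 ^+ r * v pt2 + v pt1 ^+ d.

(* The sum is (Y^d - (p y)^d) / (x^r w), which makes x^r Z + Y^d equal to
   x^r h + p^d (x^r z + y^d). *)
Definition shear (p q e h : R) (v : 'I_4 -> R) : 'I_4 -> R :=
  let Y := p * v pt1 + v pt0 ^+ r * v pt3 in
  mkpt (v pt0) Y
    (h + p ^+ d * v pt2 - v pt3 * \sum_(j < d) Y ^+ (d.-1 - j) * (p * v pt1) ^+ j)
    (e * v pt1 - q * v pt3).

Lemma shearE p q e h v :
  let Y := p * v pt1 + v pt0 ^+ r * v pt3 in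
  [/\ shear p q e h v pt0 = v pt0, shear p q e h v pt1 = Y,
      shear p q e h v pt2 =
        h + p ^+ d * v pt2 - v pt3 * \sum_(j < d) Y ^+ (d.-1 - j) * (p * v pt1) ^+ j
    & shear p q e h v pt3 = e * v pt1 - q * v pt3].
Proof. exact: mkptE. Qed.

Lemma eq_xrz_yd v v' : v =1 v' -> xrz_yd v = xrz_yd v'.
Proof. by move=> vv'; rewrite /xrz_yd !vv'. Qed.

Lemma eq_shear p q e h v v' : v =1 v' -> shear p q e h v =1 shear p q e h v'.
Proof. by move=> vv' i; rewrite /shear !vv'. Qed.

Lemma xrz_yd_shear p q e h v :
  xrz_yd (shear p q e h v) = v pt0 ^+ r * h + p ^+ d * xrz_yd v.
Proof.
rewrite /xrz_yd; have [-> -> -> _] := shearE p q e h v.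
set Y := p * v pt1 + _; set S := \sum_(j < d) _.
have YS : Y ^+ d = (p * v pt1) ^+ d + v pt0 ^+ r * v pt3 * S.
  have YB : Y - p * v pt1 = v pt0 ^+ r * v pt3 by rewrite /Y; ring.
  by rewrite -YB -subrXX; ring.
by rewrite YS exprMn; ring.
Qed.

End Shear.

Lemma rmorph_shear (R S : comPzRingType) (f : {rmorphism R -> S}) d r p q e h v i :
  f (shear d r p q e h v i) = shear d r (f p) (f q) (f e) (f h) (f \o v) i.
Proof.
have [x y z w] := shearE d r p q e h v.
have [x' y' z' w'] := shearE d r (f p) (f q) (f e) (f h) (f \o v).
case: (pt_cases i) => ->; rewrite ?(x, y, z, w, x', y', z', w') //=.
- by rewrite rmorphD !rmorphM rmorphXn.
- rewrite rmorphB rmorphD !rmorphM rmorphXn rmorph_sum; congr (_ - _ * _).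
  by apply: eq_bigr => j _; rewrite rmorphM !rmorphXn rmorphD !rmorphM rmorphXn.
- by rewrite rmorphB !rmorphM.
Qed.

Section ShearInverse.
Variables (R : idomainType) (d r : nat).
Hypothesis r_gt0 : (0 < r)%N.

Lemma shearK (p q e h1 h2 : R) (v : 'I_4 -> R) :
  p * q + e * v pt0 ^+ r = 1 ->
  (v pt0 = 0 -> [/\ p = 1, q = 1, e = 0, h1 = 0 & h2 = 0]) ->
  v pt0 ^+ r * h2 + q ^+ d * (v pt0 ^+ r * h1 + p ^+ d * xrz_yd d r v) = xrz_yd d r v ->
  forall i, shear d r q p e h2 (shear d r p q e h1 v) i = v i.
Proof.
move=> hpq h0 hK.
have [x' y' z' w'] := shearE d r p q e h1 v.
have [x'' y'' z'' w''] := shearE d r q p e h2 (shear d r p q e h1 v).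
have eq_x : shear d r q p e h2 (shear d r p q e h1 v) pt0 = v pt0 by rewrite x'' x'.
have eq_y : shear d r q p e h2 (shear d r p q e h1 v) pt1 = v pt1.
  by rewrite y'' x' y' w' -[RHS]mul1r -hpq; ring.
have eq_w : shear d r q p e h2 (shear d r p q e h1 v) pt3 = v pt3.
  by rewrite w'' y' w' -[RHS]mul1r -hpq; ring.
have eq_z : shear d r q p e h2 (shear d r p q e h1 v) pt2 = v pt2.
  have [x0|x0] := eqVneq (v pt0) 0.
    (* On x = 0 the equation does not determine z, so compute directly. *)
    have [p1 q1 e0 h1_0 h2_0] := h0 x0.
    have r0 : v pt0 ^+ r = 0 by rewrite x0 expr0n gtn_eqF.
    rewrite z'' x' y' z' w' p1 q1 e0 h1_0 h2_0 r0 !(mul0r, mul1r, addr0, add0r, expr1n).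
    ring.
  have := xrz_yd_shear d r q p e h2 (shear d r p q e h1 v).
  rewrite x' (xrz_yd_shear d r p q e h1 v) hK /xrz_yd eq_x eq_y.
  by move=> /addIr /(mulfI (expf_neq0 r x0)).
by move=> i; case: (pt_cases i) => ->.
Qed.

End ShearInverse.

Section ShearPolynomialMap.
Variables (k : idomainType) (d r : nat).

Definition mpoly_x (p : {poly k}) : {mpoly k[4]} := (map_poly (@mpolyC 4 k) p).['X_pt0].

Lemma meval_mpoly_x v p : (mpoly_x p).@[v] = p.[v pt0].
Proof.
rewrite /mpoly_x -horner_map /= mevalXU -map_poly_comp map_poly_id // => c _ /=.
exact: mevalC.
Qed.

Definition shear_mpoly (p q e h : {poly k}) : 'I_4 -> {mpoly k[4]} :=
  shear d r (mpoly_x p) (mpoly_x q) (mpoly_x e) (mpoly_x h) (fun i => 'X_i).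

Lemma polymap_shear p q e h v :
  polymap (shear_mpoly p q e h) v =1 shear d r p.[v pt0] q.[v pt0] e.[v pt0] h.[v pt0] v.
Proof.
move=> i; rewrite /polymap rmorph_shear /= !meval_mpoly_x.
by case: (pt_cases i) => ->; rewrite /shear /= !mevalXU.
Qed.

Lemma polymap_shear_pt0 p q e h v : polymap (shear_mpoly p q e h) v pt0 = v pt0.
Proof.
by rewrite polymap_shear; have [] := shearE d r p.[v pt0] q.[v pt0] e.[v pt0] h.[v pt0] v.
Qed.

Definition xrz_yd_eq (K : {poly k}) (v : 'I_4 -> k) : Prop := xrz_yd d r v = K.[v pt0].

Lemma xrz_yd_eq_shear p q e h K1 K2 v :
  'X^r * h + p ^+ d * K1 = K2 -> xrz_yd_eq K1 v -> xrz_yd_eq K2 (polymap (shear_mpoly p q e h) v).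
Proof.
move=> hK hv; rewrite /xrz_yd_eq polymap_shear_pt0 (eq_xrz_yd d r (polymap_shear _ _ _ _ _)).
by rewrite xrz_yd_shear hv -hK !hornerE.
Qed.

Hypothesis r_gt0 : (0 < r)%N.

Lemma shear_mpolyK p q e h1 h2 K v :
  p * q + e * 'X^r = 1 -> 'X^r * h2 + q ^+ d * ('X^r * h1 + p ^+ d * K) = K ->
  p.[0] = 1 -> q.[0] = 1 -> e.[0] = 0 -> h1.[0] = 0 -> h2.[0] = 0 -> xrz_yd_eq K v ->
  forall i, polymap (shear_mpoly q p e h2) (polymap (shear_mpoly p q e h1) v) i = v i.
Proof.
move=> hpq hK p0 q0 e0 h1_0 h2_0 hv i.
rewrite polymap_shear polymap_shear_pt0 (eq_shear d r _ _ _ _ (polymap_shear _ _ _ _ _)).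
apply: shearK => //.
- by have := congr1 (horner^~ (v pt0)) hpq; rewrite !hornerE.
- by move=> x0; rewrite x0.
- by rewrite hv; have := congr1 (horner^~ (v pt0)) hK; rewrite !hornerE.
Qed.

Lemma iso_shear p q e h1 h2 K1 K2 :
  p * q + e * 'X^r = 1 ->
  'X^r * h1 + p ^+ d * K1 = K2 -> 'X^r * h2 + q ^+ d * K2 = K1 ->
  p.[0] = 1 -> q.[0] = 1 -> e.[0] = 0 -> h1.[0] = 0 -> h2.[0] = 0 ->
  iso_subvar (xrz_yd_eq K1) (xrz_yd_eq K2).
Proof.
move=> hpq hK1 hK2 p0 q0 e0 h1_0 h2_0.
exists (shear_mpoly p q e h1), (shear_mpoly q p e h2); split=> v.
- exact: xrz_yd_eq_shear.
- exact: xrz_yd_eq_shear.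
- by apply: shear_mpolyK; rewrite ?hK1.
- by apply: shear_mpolyK => //; [rewrite mulrC | rewrite hK2].
Qed.

End ShearPolynomialMap.

Lemma iso_subvar_ext (k : comNzRingType) (A A' B B' : ('I_4 -> k) -> Prop) :
  (forall v, A v <-> A' v) -> (forall v, B v <-> B' v) ->
  iso_subvar A B -> iso_subvar A' B'.
Proof.
move=> AA' BB' [F [G [FAB GBA GF FG]]]; exists F, G; split=> v.
- by move/AA'/FAB/BB'.
- by move/BB'/GBA/AA'.
- by move/AA'/GF.
- by move/BB'/FG.
Qed.

Lemma iso_Xt1_Vt1 (k : fieldType) (d r : nat) (a : k) :
  d%:R != 0 :> k -> (d < r)%N -> (r < 2 * d)%N ->
  iso_subvar (inXt1 d r a) (inVt1 d r).
Proof.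
move=> dk hdr hr; have d_gt0 := natr_neq0_gt0 dk.
set e := a / d%:R; set u : {poly k} := e%:P * 'X^d.
set v : {poly k} := (e ^+ 2)%:P * 'X^(2 * d - r).
have u2 : u ^+ 2 = 'X^r * v by exact: sqr_polyCXn (ltnW hr).
have [A [B [hA hB]]] := expr1DB_cofactors d u2.
have ha : a *: 'X^d = d%:R * u by exact: scale_Xn_natr.
have u0 : u.[0] = 0 by rewrite !hornerE expr0n gtn_eqF // mulr0.
have v0 : v.[0] = 0 by rewrite !hornerE expr0n gtn_eqF ?subn_gt0 // mulr0.
have iso : iso_subvar (xrz_yd_eq d r (1 - a *: 'X^d)) (xrz_yd_eq d r 1).
  apply: (@iso_shear k d r (ltn_trans d_gt0 hdr) (1 + u) (1 - u) v (v * B) (v * A)).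
  - by rewrite [v * _]mulrC -u2; ring.
  - by rewrite ha.
  - by rewrite mulr1 ha.
  - by rewrite hornerD u0 -polyC1 hornerC addr0.
  - by rewrite hornerD hornerN u0 -polyC1 hornerC subr0.
  - exact: v0.
  - by rewrite hornerM v0 mul0r.
  - by rewrite hornerM v0 mul0r.
apply: iso_subvar_ext iso => w; rewrite /xrz_yd_eq /inXt1 /inVt1 /xrz_yd !hornerE //.
by split=> hw; [rewrite hw | rewrite -hw]; ring.
Qed.

Theorem proposition1p4p27 (k : closedFieldType) (hchar : [pchar k] =i pred0)
  (d r : nat) (hd : (2 <= d)%N) (hdr : (d < r)%N) (hr : (r < 2 * d)%N) (a : k) :
  (* (1) p_lambda = lambda - (a/d) lambda x^d *)
  (forall lam : k, lam ^+ d = 1 ->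
     is_p_lambda d r a lam (lam%:P - (a / d%:R * lam) *: 'X^d) /\
     (forall p, is_p_lambda d r a lam p -> p = lam%:P - (a / d%:R * lam) *: 'X^d))
  /\
  (* (2) *)
  (forall (lam : k) (p1 pl : {poly k}), lam ^+ d = 1 ->
     is_p_lambda d r a 1 p1 -> is_p_lambda d r a lam pl ->
     let x := RFx k in let c := RFc k in
     let L : RF k := tofrac (lam%:P%:P) in
     let aF : RF k := tofrac (a%:P%:P) in
     (lam != 1 -> sigma d aF x c
        = (1 - L)^-1 * (RFpol (p1 \Po (lam *: 'X)) - RFpol (pl \Po (lam *: 'X))) * c)
     /\
     (L ^+ (r - 1))^-1 * x ^+ r
       * sigma d aF (L^-1 * x) (L ^+ (r - 1) * (c + (1 - L) / x ^+ r))
       = x ^+ r * sigma d aF x c + RFpol p1 - RFpol pl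
     /\
     (L ^+ (r - 1))^-1 * x ^+ r
       * tau d r aF (L^-1 * x)
           (L ^+ (r - 1) * (c + (RFpol p1 - RFpol pl) / x ^+ r))
       = x ^+ r * tau d r aF x c + 1 - L)
  /\
  (* (3) X~(d,r) x A^1 is isomorphic to V~(d,r) x A^1 *)
  iso_subvar (inXt1 d r a) (inVt1 d r).
Proof.
have d_gt0 : (0 < d)%N := ltnW hd.
have dk : d%:R != 0 :> k by rewrite (pcharf0P _).1 // -lt0n.
have p_lamE lam p : lam ^+ d = 1 -> is_p_lambda d r a lam p -> p = p_lam d a lam.
  move=> hl hp; exact: (p_lam_unique dk hl hp (p_lam_spec a dk hdr (ltnW hr) hl)).
split; [|split].
- move=> lam hl; split=> [|p /(p_lamE _ _ hl)] //.
  exact: (p_lam_spec a dk hdr (ltnW hr) hl).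
- move=> lam p1 pl hl /(p_lamE _ _ (expr1n _ d)) -> /(p_lamE _ _ hl) -> x c L aF.
  have hL : L ^+ d = 1 by rewrite -[L]/(RFconst lam) -rmorphXn hl rmorph1.
  rewrite !(p_lam_comp a hl) !RFpol_p_lam rmorph1 -[RFconst a]/aF -[RFconst lam]/L -/x.
  split; [|split].
  + by move=> lam1; apply: sigma_p_lamB; rewrite -[L]/(RFconst lam) fmorph_eq1.
  + exact: (sigma_twist _ _ d_gt0 hL _ (RFx_neq0 k)).
  + exact: (tau_twist _ d_gt0 hL _ (RFx_neq0 k) (ltn_trans d_gt0 hdr) (ltnW hr)).
- exact: iso_Xt1_Vt1.
Qed.
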